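(* In the setting below with $P=\mathfrak S$ and the absolute error criterion, assume $\lambda\in\ell_{\tau_0}$ for some $\tau_0\in(0,\infty)$. Then: (i) if $\lambda_1<1$, $\{S_d\}$ is strongly polynomially tractable; (ii) if $\lambda_1=1>\lambda_2$ and $b_d\in O(1)$, $\{S_d\}$ is strongly polynomially tractable; (iii) if $\lambda_1=1$ and $b_d\in O(\ln d)$, $\{S_d\}$ is polynomially tractable.
   Context: Setting: $S_1:H_1\to G_1$ is a compact linear operator between real Hilbert spaces ($H_1$ infinite-dimensional separable); $\lambda=(\lambda_m)_{m\in\mathbb N}$, $\lambda_1\ge\lambda_2\ge\dots\ge0$, are the eigenvalues of $S_1^\dagger S_1$. $S_d=S_1^{\otimes d}:H_1^{\otimes d}\to G_1^{\otimes d}$. For each $d$ fix $\emptyset\ne I_d=\{i_1<\dots<i_{a_d}\}\subset\{1,\dots,d\}$ ($I_1=\{1\}$), put $a_d=\#I_d$, $b_d=d-a_d$, and fix one type $P\in\{\mathfrak S,\mathfrak A\}$ for all $d$; the problem $\{S_d\}$ is the family of restrictions of $S_d$ to the $I_d$-symmetric subspace (if $P=\mathfrak S$) or $I_d$-antisymmetric subspace (if $P=\mathfrak A$) of $H_1^{\otimes d}$, i.e. the range of $\frac1{a_d!}\sum_{\pi}(\pm1)U_\pi$, the sum over permutations $\pi$ of $\{1,\dots,d\}$ fixing all points outside $I_d$, $U_\pi(f_1\otimes\cdots\otimes f_d)=f_{\pi(1)}\otimes\cdots\otimes f_{\pi(d)}$, sign $(-1)^{|\pi|}$ used for $\mathfrak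 A$. Let $\nabla_d=\{k\in\mathbb N^d:k_{i_1}\le\dots\le k_{i_{a_d}}\}$ for $P=\mathfrak S$ and with strict inequalities for $P=\mathfrak A$; $\lambda_{d,k}=\prod_{l=1}^d\lambda_{k_l}$; $\psi:\mathbb N\to\nabla_d$ a bijection with $\lambda_{d,\psi(1)}\ge\lambda_{d,\psi(2)}\ge\cdots$. These are exactly the eigenvalues of $S_d^\dagger S_d$ on the subspace, and the information complexity (absolute error) is $n(\epsilon,d)=\#\{k\in\nabla_d:\lambda_{d,k}>\epsilon^2\}$, the initial error $\epsilon^{\rm init}_d=\sqrt{\lambda_{d,\psi(1)}}$ (equal to $\lambda_1^{d/2}$ if $P=\mathfrak S$, and $\sqrt{\lambda_1^{b_d}\lambda_1\lambda_2\cdots\lambda_{a_d}}$ if $P=\mathfrak A$). Polynomially tractable: $\exists C,p>0,q\ge0$ with $n(\epsilon,d)\le C\epsilon^{-p}d^q$ for all $d\in\mathbb N,\epsilon\in(0,1]$; strongly polynomially tractable: this with $q=0$. Standing assumptions: $\lambda_2>0$ and $\epsilon_d^{\rm init}>0$ for all $d$. $\ell_\tau$: sequences with $\|\lambda\|_{\ell_\tau}^\tau=\sum_m\lambda_m^\tau<\infty$. *)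

From Stdlib Require Import Reals Lra Lia List.
Import ListNotations.
Open Scope R_scope.

(* Conventions (0-based): lam m is the paper's lambda_{m+1}; a multi-index
   k in N^d is a list of length d of (0-based) indices; positions of
   {1..d} are 0..d-1.  I d : nat -> bool is the indicator of I_d (only
   positions < d matter). *)

Definition powr (x tau : R) : R := if Req_EM_T x 0 then 0 else Rpower x tau.

Definition in_ell (lam : nat -> R) (tau : R) : Prop :=
  exists l, Un_cv (fun N => sum_f_R0 (fun m => powr (lam m) tau) N) l.

Definition prodlam (lam : nat -> R) (k : list nat) : R :=
  fold_right (fun m acc => lam m * acc) 1 k.

Definition a_d (I : nat -> nat -> bool) (d : nat) : nat :=
  length (filter (I d) (seq 0 d)).
Definition b_d (I : nat -> nat -> bool) (d : nat) : nat := (d - a_d I d)%nat.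

Definition in_nabla_S (I : nat -> nat -> bool) (d : nat) (k : list nat) : Prop :=
  length k = d /\
  forall i j, (i < j < d)%nat -> I d i = true -> I d j = true ->
    (nth i k 0 <= nth j k 0)%nat.

(* n(eps,d) <= N, where n(eps,d) = #{k in nabla_d : lambda_{d,k} > eps^2}
   (stated for a possibly infinite set: every finite duplicate-free
   family of such k has at most N elements). *)
Definition n_le (lam : nat -> R) (I : nat -> nat -> bool) (eps : R) (d : nat)
  (N : R) : Prop :=
  forall L : list (list nat), NoDup L ->
    (forall k, In k L -> in_nabla_S I d k /\ prodlam lam k > eps ^ 2) ->
    INR (length L) <= N.

Definition poly_tractable (lam : nat -> R) (I : nat -> nat -> bool) : Prop :=
  exists C p q, 0 < C /\ 0 < p /\ 0 <= q /\
    forall d eps, (1 <= d)%nat -> 0 < eps <= 1 ->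
      n_le lam I eps d (C * Rpower eps (- p) * Rpower (INR d) q).

Definition strongly_poly_tractable (lam : nat -> R) (I : nat -> nat -> bool) : Prop :=
  exists C p, 0 < C /\ 0 < p /\
    forall d eps, (1 <= d)%nat -> 0 < eps <= 1 ->
      n_le lam I eps d (C * Rpower eps (- p)).

From Stdlib Require Import Reals List Lia Lra.
Import ListNotations.
Open Scope R_scope.

(* Fix tau = tau0 and an integer n >= 1, and weigh the index m by
   mu_m = (lambda_m^tau)^n <= 1.  A multi-index k counted by n(eps,d)
   satisfies prod_l mu_{k_l} > eps^(2 tau n), hence (Markov-type count)
     n(eps,d) <= eps^(-2 tau n) * sum over k in nabla_d of prod_l mu_{k_l}.
   Splitting k into its b_d free and its a_d sorted coordinates, the free
   part contributes at most S^(b_d), where S bounds sum_m mu_m.  A sorted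
   word of length a_d consists of a block of zeros, a nondecreasing word
   with letters in {1,..,r-1} (at most (a_d+1)^(r-1) of them, each of
   weight <= 1) and j letters >= r, of total weight <= 2^(-j) as soon as
   sum_{m>=r} mu_m <= 1/2.  This gives (lemma count_eps)
     n(eps,d) <= eps^(-2 tau n) * S^(b_d) * (a_d+1)^(r-1) * 2.
   Since lambda is in ell_tau, the tail condition holds for large n as
   soon as lambda_r < 1 (lemma tail_small).  The three cases then choose r:
   (i) r = 1 with even S <= 1; (ii) r = 1 with b_d bounded; (iii) some r
   with lambda_r < 1, where S^(b_d) <= d^(C ln S), (a_d+1)^(r-1) <= (2d)^(r-1). *)

Fixpoint lsum {A} (f : A -> R) (l : list A) : R :=
  match l with [] => 0 | x :: l' => f x + lsum f l' end.

Lemma lsum_app {A} (f : A -> R) l1 l2 : lsum f (l1 ++ l2) = lsum f l1 + lsum f l2.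
Proof. induction l1; simpl; [lra | rewrite IHl1; lra]. Qed.

Lemma lsum_map {A B} (f : B -> R) (g : A -> B) l :
  lsum f (map g l) = lsum (fun x => f (g x)) l.
Proof. induction l; simpl; [lra | rewrite IHl; lra]. Qed.

Lemma lsum_flat_map {A B} (f : B -> R) (g : A -> list B) l :
  lsum f (flat_map g l) = lsum (fun x => lsum f (g x)) l.
Proof. induction l; simpl; [lra | rewrite lsum_app, IHl; lra]. Qed.

Lemma lsum_scal {A} (f : A -> R) c l : lsum (fun x => c * f x) l = c * lsum f l.
Proof. induction l; simpl; [lra | rewrite IHl; lra]. Qed.

Lemma lsum_const {A} (c : R) (l : list A) : lsum (fun _ => c) l = c * INR (length l).
Proof. induction l; [simpl; ring |]. cbn [lsum length]. rewrite S_INR, IHl. ring. Qed.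

Lemma lsum_le {A} (f g : A -> R) l :
  (forall x, In x l -> f x <= g x) -> lsum f l <= lsum g l.
Proof.
  induction l as [|x l IH]; simpl; intros H; [lra |].
  pose proof (H x (or_introl eq_refl)).
  pose proof (IH (fun y Hy => H y (or_intror Hy))). lra.
Qed.

Lemma lsum_nonneg {A} (f : A -> R) l : (forall x, In x l -> 0 <= f x) -> 0 <= lsum f l.
Proof.
  intros H. apply Rle_trans with (lsum (fun _ => 0) l).
  - rewrite lsum_const. lra.
  - apply lsum_le; auto.
Qed.

Lemma lsum_incl {A} (f : A -> R) (L E : list A) :
  (forall x, 0 <= f x) -> NoDup L -> incl L E -> lsum f L <= lsum f E.
Proof.
  intros Hf HL. revert E. induction HL as [|x L Hx HL IH]; intros E Hi; simpl.
  - apply lsum_nonneg; auto.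
  - assert (Hxe : In x E) by (apply Hi; left; auto).
    destruct (in_split _ _ Hxe) as [E1 [E2 ->]].
    assert (Hrest : lsum f L <= lsum f (E1 ++ E2)).
    { apply IH. intros y Hy.
      assert (Hy' : In y (E1 ++ x :: E2)) by (apply Hi; right; auto).
      apply in_app_or in Hy'. apply in_or_app.
      destruct Hy' as [H|[H|H]]; auto. subst; contradiction. }
    rewrite lsum_app in *. simpl. lra.
Qed.

Lemma NoDup_map_in {A B} (f : A -> B) l : NoDup l ->
  (forall x y, In x l -> In y l -> f x = f y -> x = y) -> NoDup (map f l).
Proof.
  induction 1 as [|x l Hx Hl IH]; intros Hi; simpl; constructor.
  - intros Hin. apply in_map_iff in Hin. destruct Hin as [y [Hy1 Hy2]].
    assert (y = x) by (apply Hi; simpl; auto). subst; contradiction.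
  - apply IH. intros; apply Hi; simpl; auto.
Qed.

Lemma count_by_weight {A B} (w : B -> R) (f : A -> B) (c : R) (L : list A) (E : list B) :
  0 < c -> (forall y, 0 <= w y) -> NoDup L ->
  (forall x y, In x L -> In y L -> f x = f y -> x = y) ->
  (forall x, In x L -> In (f x) E /\ c < w (f x)) ->
  INR (length L) <= / c * lsum w E.
Proof.
  intros Hc Hw HL Hinj Hf.
  assert (Hc' : 0 < / c) by (apply Rinv_0_lt_compat; auto).
  rewrite <- lsum_scal, <- (length_map f L).
  apply Rle_trans with (lsum (fun y => / c * w y) (map f L)).
  - rewrite <- (Rmult_1_l (INR _)), <- lsum_const.
    apply lsum_le. intros y Hy. apply in_map_iff in Hy. destruct Hy as [x [<- Hx]].
    apply Rmult_le_reg_l with c; [auto |].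
    rewrite <- Rmult_assoc, Rinv_r by lra. pose proof (proj2 (Hf x Hx)). lra.
  - apply lsum_incl.
    + intros y. apply Rmult_le_pos; [lra | auto].
    + apply NoDup_map_in; auto.
    + intros y Hy. apply in_map_iff in Hy. destruct Hy as [x [<- Hx]]. apply Hf; auto.
Qed.

Lemma prodlam_app mu x y : prodlam mu (x ++ y) = prodlam mu x * prodlam mu y.
Proof. induction x; simpl; [lra | rewrite IHx; lra]. Qed.

Lemma prodlam_nonneg mu k : (forall m, 0 <= mu m) -> 0 <= prodlam mu k.
Proof. intros H; induction k; simpl; [lra |]. apply Rmult_le_pos; auto. Qed.

Lemma prodlam_le1 mu k : (forall m, 0 <= mu m <= 1) -> prodlam mu k <= 1.
Proof.
  intros H; induction k as [|a k IH]; simpl; [lra |].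
  pose proof (prodlam_nonneg mu k (fun m => proj1 (H m))). specialize (H a).
  apply Rle_trans with (1 * prodlam mu k); [apply Rmult_le_compat_r |]; lra.
Qed.

Definition prodE (X Y : list (list nat)) : list (list nat) :=
  flat_map (fun x => map (fun y => x ++ y) Y) X.

Lemma lsum_prodE mu X Y :
  lsum (prodlam mu) (prodE X Y) = lsum (prodlam mu) X * lsum (prodlam mu) Y.
Proof.
  assert (Hl : forall a, lsum (fun y => prodlam mu (a ++ y)) Y = prodlam mu a * lsum (prodlam mu) Y).
  { intros a. induction Y; simpl; [ring |]. rewrite prodlam_app, IHY. ring. }
  unfold prodE. rewrite lsum_flat_map. induction X; simpl; [ring |].
  rewrite IHX, lsum_map, Hl. ring.
Qed.

Lemma In_prodE X Y x y : In x X -> In y Y -> In (x ++ y) (prodE X Y).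
Proof. intros. unfold prodE. apply in_flat_map. exists x. split; auto. apply in_map; auto. Qed.

Fixpoint allL (n : nat) (X : list nat) : list (list nat) :=
  match n with O => [[]] | S n' => prodE (map (fun m => [m]) X) (allL n' X) end.

Lemma lsum_allL mu n X : lsum (prodlam mu) (allL n X) = (lsum mu X) ^ n.
Proof.
  assert (E : lsum (fun x => prodlam mu [x]) X = lsum mu X).
  { induction X; cbn [lsum]; [ring |]. rewrite IHX; simpl; ring. }
  induction n; simpl; [ring |]. rewrite lsum_prodE, IHn, lsum_map, E. ring.
Qed.

Lemma In_allL n X k : length k = n -> (forall y, In y k -> In y X) -> In k (allL n X).
Proof.
  revert k; induction n; intros k Hl Hk; destruct k as [|m k]; try discriminate.
  - simpl; auto.
  - change (m :: k) with ([m] ++ k). cbn [allL]. apply In_prodE.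
    + apply (in_map (fun m => [m])); apply Hk; simpl; auto.
    + apply IHn; simpl in Hl; auto. intros; apply Hk; simpl; auto.
Qed.

Fixpoint srt (l : list nat) : Prop :=
  match l with [] => True | x :: l' => Forall (le x) l' /\ srt l' end.

Lemma srt_filter (f : nat -> bool) l : srt l -> srt (filter f l).
Proof.
  induction l; simpl; auto. intros [H1 H2]. destruct (f a); simpl; auto.
  split; auto. rewrite Forall_forall in *. intros x Hx. apply filter_In in Hx. apply H1; tauto.
Qed.

Lemma srt_split t v : srt v ->
  v = filter (fun y => Nat.ltb y t) v ++ filter (fun y => Nat.leb t y) v.
Proof.
  induction v as [|x v IH]; simpl; auto. intros [H1 H2].
  destruct (Nat.ltb x t) eqn:E.
  - apply Nat.ltb_lt in E. replace (Nat.leb t x) with false by (symmetry; apply Nat.leb_gt; lia).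
    simpl. f_equal. auto.
  - apply Nat.ltb_ge in E. replace (Nat.leb t x) with true by (symmetry; apply Nat.leb_le; lia).
    rewrite Forall_forall in H1.
    rewrite (filter_ext_in (fun y => Nat.ltb y t) (fun _ => false)),
      (filter_ext_in (fun y => Nat.leb t y) (fun _ => true)), filter_false, filter_true.
    + reflexivity.
    + intros y Hy. apply Nat.leb_le. specialize (H1 y Hy). lia.
    + intros y Hy. apply Nat.ltb_ge. specialize (H1 y Hy). lia.
Qed.

Lemma all_repeat (s : nat) l : (forall y, In y l -> y = s) -> l = repeat s (length l).
Proof. induction l; simpl; intros H; auto. rewrite (H a) by auto. f_equal; auto. Qed.

(* Esrt s q n: nondecreasing words of length <= n with letters in
   [s, s+q), each given by the multiplicities of its q letters; there are
   at most (n+1)^q of them. *)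
Fixpoint Esrt (s q n : nat) : list (list nat) :=
  match q with O => [[]] | S q' => prodE (map (repeat s) (seq 0 (S n))) (Esrt (S s) q' n) end.

Lemma lsum_Esrt mu s q n : (forall m, 0 <= mu m <= 1) ->
  0 <= lsum (prodlam mu) (Esrt s q n) <= INR (S n) ^ q.
Proof.
  intros Hmu. revert s; induction q; intros s; cbn [Esrt].
  - simpl. lra.
  - rewrite lsum_prodE. destruct (IHq (S s)) as [A B].
    assert (Hblock : 0 <= lsum (prodlam mu) (map (repeat s) (seq 0 (S n))) <= INR (S n)).
    { rewrite lsum_map. split.
      - apply lsum_nonneg; intros; apply prodlam_nonneg; intros; apply Hmu.
      - apply Rle_trans with (lsum (fun _ => 1) (seq 0 (S n))).
        + apply lsum_le. intros; apply prodlam_le1; auto.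
        + rewrite lsum_const, length_seq; lra. }
    change (INR (S n) ^ S q) with (INR (S n) * INR (S n) ^ q).
    split; [apply Rmult_le_pos; lra |]. apply Rmult_le_compat; lra.
Qed.

Lemma In_Esrt s q n v : srt v -> (length v <= n)%nat ->
  (forall y, In y v -> s <= y < s + q)%nat -> In v (Esrt s q n).
Proof.
  revert s v; induction q; intros s v Hs Hl Hy; cbn [Esrt].
  - destruct v as [|y v]; simpl; auto. specialize (Hy y (or_introl eq_refl)). lia.
  - rewrite (srt_split (S s) v Hs). apply In_prodE.
    + apply in_map_iff. exists (length (filter (fun y => Nat.ltb y (S s)) v)). split.
      * symmetry. apply all_repeat. intros y Hy'. apply filter_In in Hy'.
        destruct Hy' as [H1 H2]. apply Nat.ltb_lt in H2. specialize (Hy y H1). lia.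
      * apply in_seq. pose proof (filter_length_le (fun y => Nat.ltb y (S s)) v). lia.
    + apply IHq.
      * apply srt_filter; auto.
      * pose proof (filter_length_le (fun y => Nat.leb (S s) y) v). lia.
      * intros y Hy'. apply filter_In in Hy'. destruct Hy' as [H1 H2].
        apply Nat.leb_le in H2. specialize (Hy y H1). lia.
Qed.

(* V a r N: nondecreasing words of length a with letters < N, each written
   as a block of zeros, a nondecreasing word with letters in [1, r) and an
   arbitrary word of j letters in [r, N). *)
Definition V (a r N : nat) : list (list nat) :=
  flat_map (fun j => map (fun x => repeat 0%nat (a - length x) ++ x)
     (prodE (Esrt 1 (r-1) a) (allL j (seq r N)))) (seq 0 (S a)).

Lemma In_V a r N v : srt v -> length v = a -> (forall y, In y v -> y < N)%nat ->
  (1 <= r)%nat -> In v (V a r N).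
Proof.
  intros Hs Hl HN Hr.
  pose proof (srt_split 1 v Hs) as Hsp.
  set (Z := filter (fun y => Nat.ltb y 1) v) in *.
  set (x := filter (fun y => Nat.leb 1 y) v) in *.
  assert (HZ : Z = repeat 0%nat (length Z)).
  { apply all_repeat. intros y Hy. unfold Z in Hy. apply filter_In in Hy.
    destruct Hy as [_ H]. apply Nat.ltb_lt in H. lia. }
  assert (HlZ : length Z = (a - length x)%nat).
  { rewrite Hsp in Hl. rewrite length_app in Hl. lia. }
  assert (Hxs : srt x) by (apply srt_filter; auto).
  assert (Hxin : forall y, In y x -> In y v /\ (1 <= y)%nat).
  { intros y Hy. unfold x in Hy. apply filter_In in Hy. destruct Hy as [H1 H2].
    apply Nat.leb_le in H2. auto. }
  pose proof (srt_split r x Hxs) as Hsx.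
  set (pre := filter (fun y => Nat.ltb y r) x) in *.
  set (w := filter (fun y => Nat.leb r y) x) in *.
  assert (Hlx : length x = (length pre + length w)%nat) by (rewrite Hsx at 1; apply length_app).
  assert (Hxa : (length x <= a)%nat) by (rewrite Hsp, length_app in Hl; lia).
  unfold V. apply in_flat_map. exists (length w). split.
  - apply in_seq. lia.
  - apply in_map_iff. exists x. split.
    + rewrite <- HlZ, <- HZ. symmetry. exact Hsp.
    + rewrite Hsx. apply In_prodE.
      * apply In_Esrt.
        -- apply srt_filter; auto.
        -- lia.
        -- intros y Hy. unfold pre in Hy. apply filter_In in Hy. destruct Hy as [H1 H2].
           apply Nat.ltb_lt in H2. apply Hxin in H1. lia.
      * apply In_allL; auto. intros y Hy. unfold w in Hy. apply filter_In in Hy.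
        destruct Hy as [H1 H2]. apply Nat.leb_le in H2. apply Hxin in H1.
        destruct H1 as [H1 _]. apply HN in H1. apply in_seq. lia.
Qed.

Lemma geom_sum s m : lsum (fun j => (/2) ^ j) (seq s m) = 2 * (/2) ^ s - 2 * (/2) ^ (s + m).
Proof.
  revert s; induction m; intros s.
  - rewrite Nat.add_0_r. simpl. ring.
  - cbn [seq lsum]. rewrite IHm. replace (S s + m)%nat with (s + S m)%nat by lia.
    simpl. field.
Qed.

(* If the letters >= r carry total weight <= 1/2, the nondecreasing words
   of length a weigh at most (a+1)^(r-1) * sum_j 2^(-j) <= 2 (a+1)^(r-1). *)
Lemma lsum_V mu a r N : (forall m, 0 <= mu m <= 1) -> lsum mu (seq r N) <= /2 ->
  lsum (prodlam mu) (V a r N) <= INR (S a) ^ (r-1) * 2.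
Proof.
  intros Hmu Hh. unfold V. rewrite lsum_flat_map.
  assert (Hn : forall m, 0 <= mu m) by (intros; apply Hmu).
  assert (0 <= lsum mu (seq r N)) by (apply lsum_nonneg; auto).
  destruct (lsum_Esrt mu 1 (r-1) a Hmu) as [E1 E2].
  apply Rle_trans with (lsum (fun j => INR (S a) ^ (r-1) * (/2)^j) (seq 0 (S a))).
  - apply lsum_le. intros j _. rewrite lsum_map.
    apply Rle_trans with (lsum (prodlam mu) (prodE (Esrt 1 (r - 1) a) (allL j (seq r N)))).
    + apply lsum_le. intros x _. rewrite prodlam_app.
      pose proof (prodlam_nonneg mu x Hn).
      pose proof (prodlam_le1 mu (repeat 0%nat (a - length x)) Hmu).
      pose proof (prodlam_nonneg mu (repeat 0%nat (a - length x)) Hn). nra.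
    + rewrite lsum_prodE, lsum_allL. apply Rmult_le_compat; auto.
      * apply pow_le; auto.
      * apply pow_incr; lra.
  - rewrite lsum_scal, geom_sum.
    assert (0 <= (/2)^(0 + S a)) by (apply pow_le; lra).
    assert (0 <= INR (S a) ^ (r-1)) by (apply pow_le; apply pos_INR).
    replace ((/2)^0) with 1 by (simpl; ring). nra.
Qed.

Fixpoint sel (p : nat -> bool) (i : nat) (k : list nat) : list nat :=
  match k with [] => [] | x :: k' => if p i then x :: sel p (S i) k' else sel p (S i) k' end.

Lemma sel_len p i k : length (sel p i k) = length (filter p (seq i (length k))).
Proof. revert i; induction k; intros i; simpl; auto. destruct (p i); simpl; auto. Qed.

Lemma sel_in p i k y : In y (sel p i k) -> In y k.
Proof.
  revert i; induction k; intros i; simpl; auto. destruct (p i); simpl.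
  - intros [H|H]; auto. right; eapply IHk; eauto.
  - intros H; right; eapply IHk; eauto.
Qed.

Lemma sel_in_pos p i k y : In y (sel p i k) ->
  exists b, (b < length k)%nat /\ p (i + b)%nat = true /\ nth b k 0%nat = y.
Proof.
  revert i; induction k; intros i; simpl; [tauto |].
  destruct (p i) eqn:E; simpl.
  - intros [H|H].
    + exists 0%nat. rewrite Nat.add_0_r. repeat split; auto; lia.
    + destruct (IHk (S i) H) as [b [H1 [H2 H3]]]. exists (S b).
      replace (i + S b)%nat with (S i + b)%nat by lia. repeat split; auto; lia.
  - intros H. destruct (IHk (S i) H) as [b [H1 [H2 H3]]]. exists (S b).
    replace (i + S b)%nat with (S i + b)%nat by lia. repeat split; auto; lia.
Qed.

Lemma sel_srt p i k :
  (forall a b, (a < b < length k)%nat -> p (i + a)%nat = true -> p (i + b)%nat = true ->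
     (nth a k 0 <= nth b k 0)%nat) -> srt (sel p i k).
Proof.
  revert i; induction k as [|x k IH]; intros i H; simpl; auto.
  assert (IH' : srt (sel p (S i) k)).
  { apply IH. intros a b Hab Ha Hb. apply (H (S a) (S b)); simpl; try lia.
    - replace (i + S a)%nat with (S i + a)%nat by lia; auto.
    - replace (i + S b)%nat with (S i + b)%nat by lia; auto. }
  destruct (p i) eqn:E; simpl; auto. split; auto.
  apply Forall_forall. intros y Hy. destruct (sel_in_pos _ _ _ _ Hy) as [b [H1 [H2 H3]]].
  subst y. apply (H 0%nat (S b)); simpl; try lia.
  - rewrite Nat.add_0_r; auto.
  - replace (i + S b)%nat with (S i + b)%nat by lia; auto.
Qed.

Lemma app_inv_length {A} (a1 a2 b1 b2 : list A) : length a1 = length a2 ->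
  a1 ++ b1 = a2 ++ b2 -> a1 = a2 /\ b1 = b2.
Proof.
  revert a2; induction a1; intros a2 Hl H; destruct a2; try discriminate; simpl in *; auto.
  injection H; intros. destruct (IHa1 a2) as [-> ->]; auto. subst; auto.
Qed.

Definition split_word (p : nat -> bool) (k : list nat) : list nat :=
  sel (fun j => negb (p j)) 0 k ++ sel p 0 k.

Lemma prodlam_split_word mu p k : prodlam mu (split_word p k) = prodlam mu k.
Proof.
  unfold split_word. rewrite prodlam_app. generalize 0%nat.
  induction k as [|x k IH]; intros i; simpl; [ring |].
  rewrite <- (IH (S i)). destruct (p i); simpl; ring.
Qed.

Lemma split_word_inj p k1 k2 : length k1 = length k2 ->
  split_word p k1 = split_word p k2 -> k1 = k2.
Proof.
  intros Hl. unfold split_word. intros Happ.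
  apply app_inv_length in Happ as [Hoff Hon]; [| rewrite !sel_len, Hl; auto].
  revert Hoff Hon. generalize 0%nat. revert k2 Hl.
  induction k1 as [|x k1 IH]; intros k2 Hl i H1 H2; destruct k2; try discriminate; auto.
  simpl in *. destruct (p i); simpl in *.
  - injection H2; intros; subst. f_equal. eapply IH; eauto.
  - injection H1; intros; subst. f_equal. eapply IH; eauto.
Qed.

Lemma split_word_in I d k r N : in_nabla_S I d k -> (forall y, In y k -> y < N)%nat ->
  (1 <= r)%nat -> In (split_word (I d) k) (prodE (allL (b_d I d) (seq 0 N)) (V (a_d I d) r N)).
Proof.
  intros [Hlk Hsrt] HN Hr. apply In_prodE.
  - apply In_allL.
    + rewrite sel_len, Hlk. unfold b_d, a_d.
      pose proof (filter_length (I d) (seq 0 d)) as Hc. rewrite length_seq in Hc. lia.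
    + intros y Hy. apply in_seq. apply sel_in in Hy. specialize (HN y Hy). lia.
  - apply In_V; auto.
    + apply sel_srt. intros a b Hab Ha Hb. apply Hsrt; simpl in *; auto; lia.
    + rewrite sel_len, Hlk. reflexivity.
    + intros y Hy. apply sel_in in Hy. auto.
Qed.

Lemma main_count (mu : nat -> R) (I : nat -> nat -> bool) (d r : nat) (S0 c : R) :
  (forall m, 0 <= mu m <= 1) -> (1 <= r)%nat ->
  (forall N, lsum mu (seq 0 N) <= S0) -> (forall N, lsum mu (seq r N) <= /2) -> 0 < c ->
  forall L, NoDup L -> (forall k, In k L -> in_nabla_S I d k /\ prodlam mu k > c) ->
  INR (length L) <= / c * (S0 ^ b_d I d * INR (S (a_d I d)) ^ (r-1) * 2).
Proof.
  intros Hmu Hr HS Hh Hc L HL Hk.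
  assert (Hn : forall m, 0 <= mu m) by (intros; apply Hmu).
  set (N := S (list_max (concat L))).
  assert (HN : forall k y, In k L -> In y k -> (y < N)%nat).
  { intros k y H1 H2. assert (Hc' : In y (concat L)) by (apply in_concat; eauto).
    pose proof (proj1 (list_max_le (concat L) _) (le_n _)) as F.
    rewrite Forall_forall in F. specialize (F y Hc'). unfold N. lia. }
  eapply Rle_trans.
  - apply (count_by_weight (prodlam mu) (split_word (I d)) c L
             (prodE (allL (b_d I d) (seq 0 N)) (V (a_d I d) r N))); auto.
    + intros y. apply prodlam_nonneg; auto.
    + intros x y Hx Hy. apply split_word_inj.
      rewrite (proj1 (proj1 (Hk x Hx))), (proj1 (proj1 (Hk y Hy))). reflexivity.
    + intros k Hk'. destruct (Hk k Hk') as [Hnab Hgt]. split.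
      * apply split_word_in; eauto.
      * rewrite prodlam_split_word. lra.
  - apply Rmult_le_compat_l; [apply Rlt_le, Rinv_0_lt_compat; auto |].
    rewrite lsum_prodE, lsum_allL, Rmult_assoc.
    apply Rmult_le_compat.
    + apply pow_le, lsum_nonneg; auto.
    + apply lsum_nonneg. intros; apply prodlam_nonneg; auto.
    + apply pow_incr. split; [apply lsum_nonneg; auto | apply HS].
    + apply lsum_V; auto.
Qed.

Lemma powr_nonneg x t : 0 <= powr x t.
Proof. unfold powr. destruct (Req_EM_T x 0); [lra |]. unfold Rpower. apply Rlt_le, exp_pos. Qed.

Lemma powr_pos x t : 0 < x -> powr x t = Rpower x t.
Proof. intros H. unfold powr. destruct (Req_EM_T x 0); [lra | auto]. Qed.

Lemma powr_zero t : powr 0 t = 0.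
Proof. unfold powr. destruct (Req_EM_T 0 0); [auto | lra]. Qed.

Lemma powr_one t : powr 1 t = 1.
Proof. rewrite powr_pos by lra. unfold Rpower. rewrite ln_1, Rmult_0_r, exp_0; auto. Qed.

Lemma powr_mult x y t : 0 <= x -> 0 <= y -> powr (x * y) t = powr x t * powr y t.
Proof.
  intros Hx Hy.
  destruct (Req_EM_T x 0) as [->|Hx']; [rewrite Rmult_0_l, powr_zero; ring |].
  destruct (Req_EM_T y 0) as [->|Hy']; [rewrite Rmult_0_r, powr_zero; ring |].
  rewrite !powr_pos by nra. unfold Rpower. rewrite ln_mult, <- exp_plus by lra.
  f_equal; ring.
Qed.

Lemma powr_mono x y t : 0 <= x <= y -> 0 < t -> powr x t <= powr y t.
Proof.
  intros H Ht. destruct (Req_EM_T x 0) as [->|Hx].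
  - rewrite powr_zero. apply powr_nonneg.
  - rewrite !powr_pos by lra. apply Rle_Rpower_l; lra.
Qed.

Lemma powr_lt1 x t : 0 <= x < 1 -> 0 < t -> powr x t < 1.
Proof.
  intros H Ht. destruct (Req_EM_T x 0) as [->|Hx].
  - rewrite powr_zero. lra.
  - rewrite <- (powr_one t), !powr_pos by lra. apply Rlt_Rpower_l; lra.
Qed.

Lemma prodlam_powr lam k t : (forall m, 0 <= lam m) ->
  prodlam (fun m => powr (lam m) t) k = powr (prodlam lam k) t.
Proof.
  intros H. induction k; simpl.
  - rewrite powr_one. auto.
  - rewrite IHk, powr_mult; auto. apply prodlam_nonneg; auto.
Qed.

Lemma prodlam_pow f k n : prodlam (fun m => f m ^ n) k = (prodlam f k) ^ n.
Proof. induction k; simpl; [rewrite pow1 | rewrite IHk, Rpow_mult_distr]; auto. Qed.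

Lemma pow_lt_compat_l x y n : 0 <= x < y -> (1 <= n)%nat -> x ^ n < y ^ n.
Proof.
  intros H Hn. induction n as [|[|n] IH]; [lia | simpl; lra |].
  assert (x ^ S n < y ^ S n) by (apply IH; lia).
  change (x * x ^ S n < y * y ^ S n).
  assert (0 <= x ^ S n) by (apply pow_le; lra). nra.
Qed.

Lemma pow_le_one x n : 0 <= x <= 1 -> x ^ n <= 1.
Proof.
  intros H. induction n; simpl; [lra |].
  assert (0 <= x ^ n) by (apply pow_le; lra). nra.
Qed.

Lemma n_le_weaken lam I eps d N N' : N <= N' -> n_le lam I eps d N -> n_le lam I eps d N'.
Proof. intros HN Hn L HL Hk. specialize (Hn L HL Hk). lra. Qed.

(* The counting bound for the eigenvalues themselves: with the weight
   mu_m = (lambda_m^tau)^n, the condition lambda_{d,k} > eps^2 becomes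
   prod mu_k > eps^(2 tau n). *)
Lemma count_eps (lam : nat -> R) (I : nat -> nat -> bool) (tau : R) (n r : nat) (S0 : R) d eps :
  (forall m, 0 <= lam m) -> 0 < tau -> (1 <= n)%nat -> (1 <= r)%nat ->
  (forall m, powr (lam m) tau <= 1) ->
  (forall N, lsum (fun m => powr (lam m) tau ^ n) (seq 0 N) <= S0) ->
  (forall N, lsum (fun m => powr (lam m) tau ^ n) (seq r N) <= /2) ->
  0 < eps ->
  n_le lam I eps d (Rpower eps (- (2 * tau * INR n)) * (S0 ^ b_d I d * INR (S (a_d I d)) ^ (r-1) * 2)).
Proof.
  intros Hl Ht Hn Hr H1 HS Hh He L HL Hk.
  set (c0 := Rpower (eps ^ 2) tau).
  assert (Hc0 : 0 < c0) by (unfold c0, Rpower; apply exp_pos).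
  assert (Hc : Rpower eps (2 * tau * INR n) = c0 ^ n).
  { unfold c0. rewrite <- Rpower_pow by (unfold Rpower; apply exp_pos).
    rewrite Rpower_mult. replace (eps ^ 2) with (Rpower eps (INR 2)) by (apply Rpower_pow; auto).
    rewrite Rpower_mult. f_equal. simpl. ring. }
  rewrite Rpower_Ropp, Hc.
  apply main_count with (mu := fun m => powr (lam m) tau ^ n); auto.
  - intros m. split; [apply pow_le, powr_nonneg | apply pow_le_one; split; [apply powr_nonneg | auto]].
  - apply pow_lt; auto.
  - intros k Hk'. destruct (Hk k Hk') as [A B]. split; auto.
    rewrite prodlam_pow, prodlam_powr by auto. apply Rlt_gt, pow_lt_compat_l; auto.
    split; [lra |]. rewrite powr_pos by nra. unfold c0. apply Rlt_Rpower_l; auto.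
    split; [nra | lra].
Qed.

Lemma lsum_seq_sum f N : lsum f (seq 0 (S N)) = sum_f_R0 f N.
Proof. induction N; [simpl; ring |]. rewrite seq_S, lsum_app, IHN. simpl. ring. Qed.

Lemma ell_partial_sums_le (lam : nat -> R) (tau l : R) :
  Un_cv (fun N => sum_f_R0 (fun m => powr (lam m) tau) N) l ->
  forall N, lsum (fun m => powr (lam m) tau) (seq 0 N) <= l.
Proof.
  intros Hcv.
  assert (Hg : forall N, sum_f_R0 (fun m => powr (lam m) tau) N <= l).
  { apply growing_ineq; auto. intros N. simpl. pose proof (powr_nonneg (lam (S N)) tau). lra. }
  intros [|N].
  - pose proof (Hg 0%nat). pose proof (powr_nonneg (lam 0%nat) tau). simpl in *. lra.
  - rewrite lsum_seq_sum; auto.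
Qed.

Lemma ln_nonneg x : 1 <= x -> 0 <= ln x.
Proof.
  intros H. rewrite <- ln_1. destruct (Rle_lt_or_eq_dec _ _ H) as [H'|<-]; [|lra].
  apply Rlt_le, ln_increasing; lra.
Qed.

Lemma geometric_small v l : 0 <= v < 1 -> 0 <= l -> exists n, (1 <= n)%nat /\ v ^ (n-1) * l <= /2.
Proof.
  intros Hv Hl. assert (Hy : 0 < / (2 * (l + 1))) by (apply Rinv_0_lt_compat; lra).
  destruct (pow_lt_1_zero v ltac:(rewrite Rabs_pos_eq; lra) _ Hy) as [N HN].
  exists (S N). split; [lia |]. replace (S N - 1)%nat with N by lia.
  specialize (HN N (le_n _)). rewrite Rabs_pos_eq in HN by (apply pow_le; lra).
  assert (E : / (2 * (l + 1)) * (2 * (l + 1)) = 1) by (field; lra).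
  assert (0 <= v ^ N) by (apply pow_le; lra). nra.
Qed.

Lemma pow_le_Rpower_ln S0 x b C : 1 <= S0 -> 1 <= x -> 0 <= C -> INR b <= C * ln x ->
  S0 ^ b <= Rpower x (C * ln S0).
Proof.
  intros HS Hx HC Hb. rewrite <- Rpower_pow by lra.
  apply Rle_trans with (Rpower S0 (C * ln x)); [apply Rle_Rpower; auto |].
  right. unfold Rpower. f_equal. ring.
Qed.

Lemma succ_pow_le a d q : (a <= d)%nat -> (1 <= d)%nat ->
  INR (S a) ^ q <= 2 ^ q * Rpower (INR d) (INR q).
Proof.
  intros Had Hd. pose proof (le_INR _ _ Had). pose proof (le_INR _ _ Hd) as Hd1.
  change (INR 1) with 1 in Hd1.
  rewrite Rpower_pow, <- Rpow_mult_distr by lra. apply pow_incr.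
  pose proof (pos_INR a). rewrite S_INR. lra.
Qed.

Section Tractability.

Variables (lam : nat -> R) (I : nat -> nat -> bool) (tau l : R).
Hypothesis lam_step : forall m, 0 <= lam (S m) <= lam m.
Hypothesis tau_pos : 0 < tau.
Hypothesis partial_le : forall N, lsum (fun m => powr (lam m) tau) (seq 0 N) <= l.

Let nu m := powr (lam m) tau.

Lemma lam_antitone m k : (m <= k)%nat -> lam k <= lam m.
Proof. induction 1 as [|k _ IH]; [lra |]. pose proof (lam_step k). lra. Qed.

Lemma lam_nonneg m : 0 <= lam m.
Proof. pose proof (lam_step m). pose proof (lam_antitone m (S m) ltac:(lia)). lra. Qed.

Lemma l_nonneg : 0 <= l.
Proof. pose proof (partial_le 0). simpl in *. lra. Qed.

Lemma nu_le1 : lam 0%nat <= 1 -> forall m, nu m <= 1.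
Proof.
  intros H m. unfold nu. rewrite <- (powr_one tau). apply powr_mono; auto.
  split; [apply lam_nonneg |]. pose proof (lam_antitone 0 m ltac:(lia)). lra.
Qed.

(* The n-th powers of the weights, summed from s on, are at most
   nu_s^(n-1) * sum_m nu_m, since the weights decrease. *)
Lemma tail_bound n s N : (1 <= n)%nat ->
  lsum (fun m => nu m ^ n) (seq s N) <= nu s ^ (n-1) * l.
Proof.
  intros Hn1.
  apply Rle_trans with (lsum (fun m => nu s ^ (n-1) * nu m) (seq s N)).
  - apply lsum_le. intros m Hm. apply in_seq in Hm.
    replace n with (S (n-1)) at 1 by lia. simpl. rewrite Rmult_comm.
    apply Rmult_le_compat_r; [apply powr_nonneg |]. apply pow_incr. split; [apply powr_nonneg |].
    apply powr_mono; auto. split; [apply lam_nonneg | apply lam_antitone; lia].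
  - rewrite lsum_scal. apply Rmult_le_compat_l; [apply pow_le, powr_nonneg |].
    apply Rle_trans with (lsum nu (seq 0 (s + N))); [| apply partial_le].
    rewrite seq_app, lsum_app. simpl.
    assert (0 <= lsum nu (seq 0 s)) by (apply lsum_nonneg; intros; apply powr_nonneg).
    lra.
Qed.

Lemma power_sums_le n : lam 0%nat <= 1 -> (1 <= n)%nat ->
  forall N, lsum (fun m => nu m ^ n) (seq 0 N) <= Rmax 1 l.
Proof.
  intros H0 Hn N. eapply Rle_trans; [apply tail_bound; auto |].
  pose proof (pow_le_one (nu 0) (n-1) (conj (powr_nonneg _ _) (nu_le1 H0 0))).
  pose proof (pow_le (nu 0) (n-1) (powr_nonneg _ _)).
  pose proof (Rmax_r 1 l). pose proof l_nonneg. nra.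
Qed.

Lemma tail_small s : lam s < 1 ->
  exists n, (1 <= n)%nat /\ forall t N, (s <= t)%nat -> lsum (fun m => nu m ^ n) (seq t N) <= /2.
Proof.
  intros Hs.
  assert (Hv : 0 <= nu s < 1) by (split; [apply powr_nonneg | apply powr_lt1; auto; split; [apply lam_nonneg | auto]]).
  destruct (geometric_small _ _ Hv l_nonneg) as [n [Hn Hnl]].
  exists n. split; auto. intros t N Hst.
  eapply Rle_trans; [apply tail_bound; auto |]. eapply Rle_trans; [| apply Hnl].
  apply Rmult_le_compat_r; [apply l_nonneg |]. apply pow_incr.
  split; [apply powr_nonneg |]. apply powr_mono; auto. split; [apply lam_nonneg | apply lam_antitone; auto].
Qed.

Lemma some_lam_lt1 : exists r, lam r < 1.
Proof.
  destruct (INR_unbounded l) as [N HN]. exists N.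
  destruct (Rlt_le_dec (lam N) 1) as [H|H]; auto. exfalso.
  assert (Hge : forall m, In m (seq 0 N) -> 1 <= nu m).
  { intros m Hm. apply in_seq in Hm. unfold nu. rewrite <- (powr_one tau).
    apply powr_mono; auto. pose proof (lam_antitone m N ltac:(lia)). lra. }
  pose proof (lsum_le _ _ _ Hge) as Hsum. rewrite lsum_const, length_seq in Hsum.
  assert (lsum nu (seq 0 N) <= l) by apply partial_le. lra.
Qed.

Lemma count_tail r : lam 0%nat <= 1 -> (1 <= r)%nat -> lam r < 1 ->
  exists p, 0 < p /\ forall d eps, 0 < eps ->
    n_le lam I eps d (Rpower eps (- p) * (Rmax 1 l ^ b_d I d * INR (S (a_d I d)) ^ (r-1) * 2)).
Proof.
  intros H0 Hr Hlr. destruct (tail_small r Hlr) as [n [Hn Htail]].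
  exists (2 * tau * INR n). split.
  - pose proof (le_INR _ _ Hn). simpl in *. nra.
  - intros d eps He. apply count_eps; auto using lam_nonneg.
    + exact (nu_le1 H0).
    + exact (power_sums_le n H0 Hn).
Qed.

Lemma spt_lam0_lt1 : lam 0%nat < 1 -> strongly_poly_tractable lam I.
Proof.
  intros H0. destruct (tail_small 0 H0) as [n [Hn Htail]].
  exists 2, (2 * tau * INR n). split; [lra |]. split; [pose proof (le_INR _ _ Hn); simpl in *; nra |].
  intros d eps _ He.
  apply n_le_weaken with
    (Rpower eps (- (2 * tau * INR n)) * (1 ^ b_d I d * INR (S (a_d I d)) ^ (1 - 1) * 2)).
  { rewrite pow1. simpl. lra. }
  apply count_eps; auto using lam_nonneg.
  - apply nu_le1. lra.
  - intros N. eapply Rle_trans; [apply (Htail 0%nat N (le_n _)) | lra].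
  - lra.
Qed.

Lemma spt_gap_bounded_b : lam 0%nat = 1 -> lam 1%nat < 1 ->
  (exists C : nat, forall d, (1 <= d)%nat -> (b_d I d <= C)%nat) ->
  strongly_poly_tractable lam I.
Proof.
  intros H0 H1 [C HC]. destruct (count_tail 1 ltac:(lra) (le_n _) H1) as [p [Hp Hcount]].
  assert (HS : 1 <= Rmax 1 l) by apply Rmax_l.
  exists (2 * Rmax 1 l ^ C), p. split; [pose proof (pow_lt (Rmax 1 l) C ltac:(lra)); lra |].
  split; auto. intros d eps Hd He.
  eapply n_le_weaken; [| apply Hcount; tauto].
  assert (0 < Rpower eps (- p)) by apply exp_pos.
  pose proof (Rle_pow _ _ _ HS (HC d Hd)). simpl. nra.
Qed.

Lemma pt_log_b : lam 0%nat = 1 ->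
  (exists C : R, forall d, (1 <= d)%nat -> INR (b_d I d) <= C * ln (INR d)) ->
  poly_tractable lam I.
Proof.
  intros H0 [C HC]. destruct some_lam_lt1 as [r Hr].
  assert (Hr1 : (1 <= r)%nat) by (destruct r; [lra | lia]).
  destruct (count_tail r ltac:(lra) Hr1 Hr) as [p [Hp Hcount]].
  set (S0 := Rmax 1 l). set (Cp := Rmax C 0).
  assert (HS : 1 <= S0) by apply Rmax_l.
  assert (HCp : 0 <= Cp) by apply Rmax_r.
  assert (HlnS : 0 <= ln S0) by (apply ln_nonneg; auto).
  exists (2 * 2 ^ (r-1)), p, (Cp * ln S0 + INR (r-1)).
  split; [pose proof (pow_lt 2 (r-1) ltac:(lra)); lra |]. split; auto.
  split; [pose proof (pos_INR (r-1)); nra |].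
  intros d eps Hd He.
  eapply n_le_weaken; [| apply Hcount; tauto].
  assert (Hd1 : 1 <= INR d) by (apply (le_INR 1); auto).
  assert (Hb : S0 ^ b_d I d <= Rpower (INR d) (Cp * ln S0)).
  { apply pow_le_Rpower_ln; auto. pose proof (HC d Hd). pose proof (ln_nonneg _ Hd1).
    assert (C <= Cp) by apply Rmax_l. nra. }
  assert (Ha : INR (S (a_d I d)) ^ (r-1) <= 2 ^ (r-1) * Rpower (INR d) (INR (r-1))).
  { apply succ_pow_le; auto. unfold a_d.
    pose proof (filter_length_le (I d) (seq 0 d)). rewrite length_seq in *. auto. }
  fold S0. rewrite Rpower_plus.
  assert (0 < Rpower eps (- p)) by apply exp_pos.
  replace (2 * 2 ^ (r-1) * Rpower eps (- p) * (Rpower (INR d) (Cp * ln S0) * Rpower (INR d) (INR (r-1))))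
    with (Rpower eps (- p) * (Rpower (INR d) (Cp * ln S0) * (2 ^ (r-1) * Rpower (INR d) (INR (r-1))) * 2))
    by ring.
  apply Rmult_le_compat_l; [lra |]. apply Rmult_le_compat_r; [lra |].
  apply Rmult_le_compat; auto.
  - apply pow_le. lra.
  - apply pow_le, pos_INR.
Qed.

End Tractability.

Theorem proposition5 (lam : nat -> R) (I : nat -> nat -> bool) (tau0 : R) :
  (* lambda_1 >= lambda_2 >= ... >= 0 *)
  (forall m, 0 <= lam (S m) <= lam m) ->
  (* standing assumption lambda_2 > 0 (implies eps_init > 0 for P = S) *)
  0 < lam 1%nat ->
  (* I_d nonempty subset of {1..d}, I_1 = {1} *)
  (forall d, (1 <= d)%nat -> exists i, (i < d)%nat /\ I d i = true) ->
  I 1%nat 0%nat = true ->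
  (* lambda in ell_{tau0}, tau0 in (0,oo) *)
  0 < tau0 -> in_ell lam tau0 ->
  (lam 0%nat < 1 -> strongly_poly_tractable lam I) /\
  (lam 0%nat = 1 -> lam 1%nat < 1 ->
     (exists C : nat, forall d, (1 <= d)%nat -> (b_d I d <= C)%nat) ->
     strongly_poly_tractable lam I) /\
  (lam 0%nat = 1 ->
     (exists C : R, forall d, (1 <= d)%nat -> INR (b_d I d) <= C * ln (INR d)) ->
     poly_tractable lam I).
Proof.
  intros Hstep _ _ _ Htau [l Hcv].
  pose proof (ell_partial_sums_le lam tau0 l Hcv) as Hpartial.
  split; [| split].
  - exact (spt_lam0_lt1 lam I tau0 l Hstep Htau Hpartial).
  - exact (spt_gap_bounded_b lam I tau0 l Hstep Htau Hpartial).
  - exact (pt_log_b lam I tau0 l Hstep Htau Hpartial).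
Qed.
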